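(* The system ($m\mathcal{H}1$) $$u_2=v+t\frac{p-q}{s-t},\qquad v_1=u+s\frac{p-q}{s-t},\qquad s_2=\frac{1}{t}+\frac{p-q}{t(u-v)},\qquad t_1=\frac{1}{s}+\frac{p-q}{s(u-v)},$$ together with the constraint $tu=sv$ (or equivalently with the constraint $s_2u_2=t_1v_1$), leads to the integrable lattice equation $H1$: $(x_{12}-x)(x_1-x_2)=p-q$; that is, there is a potential function $x$ on the vertices with $u=x_1x$, $v=x_2x$, $s=x_1/x$, $t=x_2/x$, and in terms of $x$ the system is exactly $H1$.
   Context: $u,s$ are functions on horizontal edges and $v,t$ on vertical edges of the $\mathbb{Z}^2$ graph; for a square with lower-left vertex $(m,n)$, $u,s$ sit on the bottom edge, $v,t$ on the left edge, $u_2,s_2$ on the top edge, $v_1,t_1$ on the right edge; $p$ depends only on $m$, $q$ only on $n$. For a vertex function, $x=x_{m,n}$, $x_1=x_{m+1,n}$, $x_2=x_{m,n+1}$, $x_{12}=x_{m+1,n+1}$. *)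

From HB Require Import structures.
From mathcomp Require Import all_boot all_order all_algebra.
Set Implicit Arguments. Unset Strict Implicit. Unset Printing Implicit Defensive.
Import Order.TTheory GRing.Theory Num.Theory.
Local Open Scope ring_scope.

Section Defs.
Variable F : fieldType.

(* Edge functions: u, s on the horizontal edge from (m,n) to (m+1,n);
   v, t on the vertical edge from (m,n) to (m,n+1).
   p depends only on m, q only on n. *)

(* The system (mH1) on every elementary square with lower-left vertex (m,n):
   u_2 = u m (n+1), s_2 = s m (n+1), v_1 = v (m+1) n, t_1 = t (m+1) n. *)
Definition mH1_system (p q : int -> F) (u v s t : int -> int -> F) : Prop :=
  forall m n : int,
    [/\ u m (n + 1) = v m n + t m n * (p m - q n) / (s m n - t m n),
        v (m + 1) n = u m n + s m n * (p m - q n) / (s m n - t m n),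
        s m (n + 1) = 1 / t m n + (p m - q n) / (t m n * (u m n - v m n))
      & t (m + 1) n = 1 / s m n + (p m - q n) / (s m n * (u m n - v m n))].

Definition mH1_constraint (u v s t : int -> int -> F) : Prop :=
  forall m n : int, t m n * u m n = s m n * v m n.

Definition mH1_nondeg (u v s t : int -> int -> F) : Prop :=
  forall m n : int, [/\ s m n != 0, t m n != 0, s m n != t m n & u m n != v m n].

Definition is_potential (x u v s t : int -> int -> F) : Prop :=
  forall m n : int,
    [/\ x m n != 0,
        u m n = x (m + 1) n * x m n,
        v m n = x m (n + 1) * x m n,
        s m n = x (m + 1) n / x m n
      & t m n = x m (n + 1) / x m n].

Definition H1 (p q : int -> F) (x : int -> int -> F) : Prop :=
  forall m n : int,
    (x (m + 1) (n + 1) - x m n) * (x (m + 1) n - x m (n + 1)) = p m - q n.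

End Defs.

(* The system gives s_2 t = t_1 s, so (s, t) is a closed multiplicative
   one-form on Z^2 and has a potential x with x_1 = s x and x_2 = t x, unique
   up to a constant factor.  The constraint t u = s v gives u/s = v/t, and the
   system then gives (u/s)_1 = s^2 (u/s) and (u/s)_2 = t^2 (u/s), so u/s = x^2
   once the constant is a square root of u/s at the origin (this is where the
   field must be algebraically closed).  Then u = x_1 x, v = x_2 x, s = x_1/x,
   t = x_2/x, and after this substitution the first equation of the system is
   equivalent to H1, which in turn implies all four. *)

From HB Require Import structures.
From mathcomp Require Import all_boot all_order all_algebra.
From mathcomp Require Import ring.
Import GRing.Theory.
Set Implicit Arguments.
Unset Strict Implicit.
Unset Printing Implicit Defensive.
Local Open Scope ring_scope.

Lemma int_ind_step_iff (P : int -> Prop) :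
  P 0 -> (forall n, P n <-> P (n + 1)) -> forall n, P n.
Proof.
move=> P0 PS; elim/int_rect=> // n IH.
  by rewrite -addn1 PoszD; apply/(PS n).
by apply/(PS (- n.+1%:Z)); rewrite -[n.+1]addn1 PoszD opprD addrNK.
Qed.

Lemma closed_sqrt (F : closedFieldType) (c : F) : exists x : F, x ^+ 2 = c.
Proof.
have /closed_rootP [x] : size ('X^2 - c%:P) != 1%N by rewrite size_XnsubC.
by rewrite rootE !hornerE subr_eq0 => /eqP; exists x.
Qed.

Section MulRec.
Variables (F : fieldType) (a : int -> F).
Hypothesis a_neq0 : forall m, a m != 0.

Fixpoint mul_rec_pos (c : F) (k : nat) : F :=
  if k is k'.+1 then a k' * mul_rec_pos c k' else c.

Fixpoint mul_rec_neg (c : F) (k : nat) : F :=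
  if k is k'.+1 then mul_rec_neg c k' / a (Negz k') else c.

Definition mul_rec (c : F) (z : int) : F :=
  match z with Posz k => mul_rec_pos c k | Negz k => mul_rec_neg c k.+1 end.

Lemma mul_rec0 c : mul_rec c 0 = c.
Proof. by []. Qed.

Lemma mul_recS c m : mul_rec c (m + 1) = a m * mul_rec c m.
Proof.
case: m => [k|[|k]]; first by rewrite -PoszD addn1.
  by rewrite /= mulrC divfK.
have -> : Negz k.+1 + 1 = Negz k by rewrite !NegzE -addn1 PoszD opprD addrNK.
by rewrite /mul_rec [mul_rec_neg _ k.+2]/= mulrC divfK.
Qed.

Lemma eq_mul_rec (f g : int -> F) :
  f 0 = g 0 -> (forall m, f (m + 1) = a m * f m) ->
  (forall m, g (m + 1) = a m * g m) -> forall m, f m = g m.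
Proof.
move=> fg0 fS gS; apply: int_ind_step_iff => // m.
by rewrite fS gS; split=> [->//|]; apply: mulfI.
Qed.

Lemma mul_rec_neq0 c : c != 0 -> forall m, mul_rec c m != 0.
Proof.
move=> c_neq0; apply: int_ind_step_iff => // m.
by rewrite mul_recS mulf_eq0 negb_or a_neq0.
Qed.

End MulRec.

Section MulPotential.
Variables (F : fieldType) (a b : int -> int -> F).
Hypotheses (a_neq0 : forall m n, a m n != 0) (b_neq0 : forall m n, b m n != 0).

Definition mul_potential (c : F) (m n : int) : F :=
  mul_rec (b m) (mul_rec (fun k => a k 0) c m) n.

Lemma mul_potential00 c : mul_potential c 0 0 = c.
Proof. by []. Qed.

Lemma mul_potentialS2 c m n :
  mul_potential c m (n + 1) = b m n * mul_potential c m n.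
Proof. exact: mul_recS. Qed.

Lemma mul_potential_neq0 c : c != 0 -> forall m n, mul_potential c m n != 0.
Proof. by move=> c_neq0 m n; do 2!apply: mul_rec_neq0 => //. Qed.

Hypothesis ab_closed : forall m n, a m (n + 1) * b m n = b (m + 1) n * a m n.

Lemma mul_potentialS1 c m n :
  mul_potential c (m + 1) n = a m n * mul_potential c m n.
Proof.
move: n; apply: (eq_mul_rec (b_neq0 (m + 1))).
- by rewrite /mul_potential !mul_rec0 mul_recS.
- exact: mul_potentialS2.
- by move=> n; rewrite mul_potentialS2 mulrA ab_closed -mulrA.
Qed.

Lemma eq_mul_potential (f g : int -> int -> F) :
  f 0 0 = g 0 0 ->
  (forall m n, f (m + 1) n = a m n * f m n) ->
  (forall m n, f m (n + 1) = b m n * f m n) ->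
  (forall m n, g (m + 1) n = a m n * g m n) ->
  (forall m n, g m (n + 1) = b m n * g m n) ->
  forall m n, f m n = g m n.
Proof.
move=> fg00 fS1 fS2 gS1 gS2.
have fg0 : forall m, f m 0 = g m 0.
  exact: (eq_mul_rec (a_neq0^~ 0) (f := f^~ 0) (g := g^~ 0)).
by move=> m; apply: (eq_mul_rec (b_neq0 m) (f := f m) (g := g m)).
Qed.

End MulPotential.

Section MH1Lattice.
Variables (F : fieldType) (p q : int -> F) (u v s t : int -> int -> F).
Hypotheses (nd : mH1_nondeg u v s t) (sys : mH1_system p q u v s t)
  (con : mH1_constraint u v s t).

Lemma mH1_s_neq0 m n : s m n != 0. Proof. by have [] := nd m n. Qed.
Lemma mH1_t_neq0 m n : t m n != 0. Proof. by have [] := nd m n. Qed.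

Lemma mH1_st_neq0 m n : s m n - t m n != 0.
Proof. by rewrite subr_eq0; have [] := nd m n. Qed.
Lemma mH1_uv_neq0 m n : u m n - v m n != 0.
Proof. by rewrite subr_eq0; have [] := nd m n. Qed.

Lemma mH1_v_eq m n : v m n = t m n * u m n / s m n.
Proof. by rewrite con; field; apply: mH1_s_neq0. Qed.

Lemma mH1_ratio_eq m n : u m n / s m n = v m n / t m n.
Proof. by rewrite mH1_v_eq; field; rewrite mH1_s_neq0 mH1_t_neq0. Qed.

Lemma mH1_closed m n : s m (n + 1) * t m n = t (m + 1) n * s m n.
Proof.
have [_ _ -> ->] := sys m n.
by field; rewrite mH1_uv_neq0 mH1_s_neq0 mH1_t_neq0.
Qed.

Lemma mH1_us_tu_neq0 m n : u m n * s m n - t m n * u m n != 0.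
Proof.
by rewrite con mulrC -mulrBr mulf_neq0 ?mH1_s_neq0 ?mH1_uv_neq0.
Qed.

Lemma mH1_u_neq0 m n : u m n != 0.
Proof.
by apply: contraNneq (mH1_us_tu_neq0 m n) => ->; rewrite mul0r mulr0 subr0.
Qed.

Lemma mH1_ratio_shift1 m n :
  u (m + 1) n / s (m + 1) n = s m n ^+ 2 * (u m n / s m n).
Proof.
rewrite mH1_ratio_eq; apply: (canLR (mulfK (mH1_t_neq0 (m + 1) n))).
have [_ -> _ ->] := sys m n; rewrite mH1_v_eq.
by field; rewrite mH1_s_neq0 mH1_st_neq0 mH1_us_tu_neq0.
Qed.

Lemma mH1_ratio_shift2 m n :
  u m (n + 1) / s m (n + 1) = t m n ^+ 2 * (u m n / s m n).
Proof.
apply: (canLR (mulfK (mH1_s_neq0 m (n + 1)))).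
have [-> _ -> _] := sys m n; rewrite mH1_v_eq.
by field; rewrite mH1_s_neq0 mH1_t_neq0 mH1_st_neq0 mH1_us_tu_neq0.
Qed.

End MH1Lattice.

Lemma mH1_potential_exists (F : closedFieldType) (p q : int -> F)
    (u v s t : int -> int -> F) :
  mH1_nondeg u v s t -> mH1_system p q u v s t -> mH1_constraint u v s t ->
  exists x : int -> int -> F, is_potential x u v s t.
Proof.
move=> nd sys con.
have s_neq0 := mH1_s_neq0 nd; have t_neq0 := mH1_t_neq0 nd.
have [c c2] := closed_sqrt (u 0 0 / s 0 0).
have c_neq0 : c != 0.
  have : c ^+ 2 != 0 by rewrite c2 mulf_neq0 ?invr_eq0 ?(mH1_u_neq0 nd con).
  by apply: contraNneq => ->; rewrite expr0n.
pose x := mul_potential s t c.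
have xS1 : forall m n, x (m + 1) n = s m n * x m n.
  exact: mul_potentialS1 s_neq0 t_neq0 (mH1_closed nd sys) c.
have xS2 : forall m n, x m (n + 1) = t m n * x m n.
  by rewrite /x; exact: mul_potentialS2.
have x_neq0 : forall m n, x m n != 0.
  by rewrite /x; exact: mul_potential_neq0.
have us_eq : forall m n, u m n / s m n = x m n ^+ 2.
  apply: (eq_mul_potential (a := fun m n => s m n ^+ 2) (b := fun m n => t m n ^+ 2)).
  - by move=> m n; rewrite expf_neq0.
  - by move=> m n; rewrite expf_neq0.
  - by rewrite /x mul_potential00 c2.
  - exact: mH1_ratio_shift1 nd sys con.
  - exact: mH1_ratio_shift2 nd sys con.
  - by move=> m n; rewrite xS1 exprMn.
  - by move=> m n; rewrite xS2 exprMn.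
exists x => m n; split => //.
- by rewrite xS1 -mulrA -expr2 -us_eq mulrC divfK.
- by rewrite xS2 -mulrA -expr2 -us_eq (mH1_ratio_eq nd con) mulrC divfK.
- by rewrite xS1 mulfK.
- by rewrite xS2 mulfK.
Qed.

Section H1Square.
Variables (F : fieldType) (x x1 x2 x12 P : F).
Hypotheses (x_neq0 : x != 0) (x2_neq0 : x2 != 0) (x1_neq_x2 : x1 != x2).

Let x1x2_neq0 : x1 - x2 != 0. Proof. by rewrite subr_eq0. Qed.

Lemma mH1_u2_eq_iff_H1 :
  x12 * x2 = x2 * x + x2 / x * P / (x1 / x - x2 / x) <->
  (x12 - x) * (x1 - x2) = P.
Proof.
rewrite -mulrBl; split=> [u2_eq | <-]; last by field; rewrite x1x2_neq0 x_neq0.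
apply: (mulfI x2_neq0).
have -> : x2 * ((x12 - x) * (x1 - x2)) = (x12 * x2 - x2 * x) * (x1 - x2) by ring.
by rewrite u2_eq; field; rewrite x1x2_neq0 x_neq0.
Qed.

Hypothesis x1_neq0 : x1 != 0.

Lemma H1_mH1_square : (x12 - x) * (x1 - x2) = P ->
  [/\ x12 * x2 = x2 * x + x2 / x * P / (x1 / x - x2 / x),
      x12 * x1 = x1 * x + x1 / x * P / (x1 / x - x2 / x),
      x12 / x2 = 1 / (x2 / x) + P / (x2 / x * (x1 * x - x2 * x))
    & x12 / x1 = 1 / (x1 / x) + P / (x1 / x * (x1 * x - x2 * x))].
Proof.
rewrite -!mulrBl => <-.
by split; field; rewrite x1x2_neq0 x_neq0 ?x1_neq0 ?x2_neq0.
Qed.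

End H1Square.

Lemma potential_mH1_H1 (F : fieldType) (p q : int -> F)
    (x u v s t : int -> int -> F) :
  is_potential x u v s t -> (forall m n, x (m + 1) n != x m (n + 1)) ->
  mH1_system p q u v s t -> H1 p q x.
Proof.
move=> pot x1_neq_x2 sys m n; have [+ _ _ _] := sys m n.
have [x2_neq0 -> _ _ _] := pot m (n + 1); have [x_neq0 _ -> -> ->] := pot m n.
by move/(mH1_u2_eq_iff_H1 _ _ x_neq0 x2_neq0 (x1_neq_x2 m n)).
Qed.

Lemma H1_mH1 (F : fieldType) (p q : int -> F) (x : int -> int -> F) :
  (forall m n, x m n != 0) -> (forall m n, x (m + 1) n != x m (n + 1)) ->
  H1 p q x ->
  mH1_system p q (fun m n => x (m + 1) n * x m n)
                 (fun m n => x m (n + 1) * x m n)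
                 (fun m n => x (m + 1) n / x m n)
                 (fun m n => x m (n + 1) / x m n).
Proof.
move=> x_neq0 x1_neq_x2 h1 m n.
exact: H1_mH1_square (x_neq0 _ _) (x_neq0 _ _) (x1_neq_x2 m n) (x_neq0 _ _) (h1 m n).
Qed.

Theorem proposition3p5 (F : closedFieldType) (p q : int -> F)
    (u v s t : int -> int -> F) :
  mH1_nondeg u v s t ->
  mH1_system p q u v s t ->
  mH1_constraint u v s t ->
  (exists x : int -> int -> F, is_potential x u v s t /\ H1 p q x) /\
  (forall x : int -> int -> F,
      (forall m n : int, x m n != 0) ->
      (forall m n : int, x (m + 1) n != x m (n + 1)) ->
      (mH1_system p q (fun m n => x (m + 1) n * x m n)
                      (fun m n => x m (n + 1) * x m n)
                      (fun m n => x (m + 1) n / x m n)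
                      (fun m n => x m (n + 1) / x m n)
       <-> H1 p q x)).
Proof.
move=> nd sys con; split.
  have [x pot] := mH1_potential_exists nd sys con.
  exists x; split=> //; apply: (potential_mH1_H1 pot _ sys) => m n.
  have [_ _ _ s_eq t_eq] := pot m n.
  by apply: contraNneq (mH1_st_neq0 nd m n) => x1_eq_x2; rewrite s_eq t_eq x1_eq_x2 subrr.
move=> x x_neq0 x1_neq_x2; split; last exact: H1_mH1.
by apply: potential_mH1_H1 => // m n; split.
Qed.
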